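(* Assume the scatter-step setting below. Then $$\mathbb{E}\max_{j,k\in\{1,\dots,h_{ps}\}}\big\|G_j-\nabla L(\theta_k)\big\|_2\le 3h_w\sigma'+3l\,\Delta(\theta_1,\dots,\theta_{h_{ps}}).$$
   Context: Coordinate-wise diameters: $\Delta_i(v_1,\dots,v_h)=\max_{j,k}|v_j[i]-v_k[i]|$, $\Delta=\sum_{i=1}^d\Delta_i$. Minimum–Diameter Averaging: for $f\ge0$, $q\ge2f+1$, $x_1,\dots,x_q\in\mathbb{R}^d$, $\mathrm{MDA}_f(x_1,\dots,x_q)$ is the average of the $x_i$, $i\in I^*$, where $I^*$ is an index set of size $q-f$ minimizing $\max_{i,j\in I}\|x_i-x_j\|_2$ over all $I\subset\{1,\dots,q\}$ with $|I|=q-f$ (ties arbitrary). Scatter-step setting: $L:\mathbb{R}^d\to\mathbb{R}$ differentiable with $l$-Lipschitz gradient; learning rate $\eta>0$; correct server parameters $\theta_1,\dots,\theta_{h_{ps}}\in\mathbb{R}^d$; correct workers' models $x_1,\dots,x_{h_w}\in\mathbb{R}^d$ with $\min_k\theta_k[i]\le x_r[i]\le\max_k\theta_k[i]$ for all coordinates $i$ and all $r$; random gradient estimates $g_1,\dots,g_{h_w}$ with $\mathbb{E}\|g_r-\nabla L(x_r)\|_2\le\sigma'$; integers $f_w\ge1$, $q_w\ge2f_w+1$; each correct server $j$ computes $G_j=\mathrm{MDA}_{f_w}$ of a list of $q_w$ vectors of which at least $q_w-f_w$ entries belong to $\{g_1,\dots,g_{h_w}\}$ and the others are arbitrary. *)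

From Stdlib Require Import Reals Lra List.
Import ListNotations.
Open Scope R_scope.

(* Vectors of R^d are represented as functions nat -> R; only the
   coordinates 0 .. d-1 are meaningful. *)
Definition vec := nat -> R.

Definition vsum_idx (d : nat) (F : nat -> R) : R :=
  fold_right Rplus 0 (map F (seq 0 d)).

Definition vsub (u v : vec) : vec := fun i => u i - v i.
Definition vadd (u v : vec) : vec := fun i => u i + v i.

Definition dot (d : nat) (u v : vec) : R := vsum_idx d (fun i => u i * v i).

Definition norm2 (d : nat) (v : vec) : R := sqrt (dot d v v).

Definition veq (d : nat) (u v : vec) : Prop := forall i, (i < d)%nat -> u i = v i.

Definition IsGradient (d : nat) (L : vec -> R) (gradL : vec -> vec) : Prop :=
  forall x : vec, forall eps : R, 0 < eps ->
    exists delta : R, 0 < delta /\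
      forall h : vec, norm2 d h < delta ->
        Rabs (L (vadd x h) - L x - dot d (gradL x) h) <= eps * norm2 d h.

Definition LipschitzGrad (d : nat) (gradL : vec -> vec) (l : R) : Prop :=
  forall u v : vec, norm2 d (vsub (gradL u) (gradL v)) <= l * norm2 d (vsub u v).

(* max over all pairs (j,k) with j,k < n of F j k  (0 if n = 0;
   used only for nonnegative F) *)
Definition maxpairs (n : nat) (F : nat -> nat -> R) : R :=
  fold_right Rmax 0 (map (fun p => F (fst p) (snd p)) (list_prod (seq 0 n) (seq 0 n))).

Definition Delta_i (h : nat) (v : nat -> vec) (i : nat) : R :=
  maxpairs h (fun j k => Rabs (v j i - v k i)).
Definition DeltaDiam (d h : nat) (v : nat -> vec) : R :=
  vsum_idx d (Delta_i h v).

Definition diam (d : nat) (xs : nat -> vec) (I : list nat) : R :=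
  fold_right Rmax 0
    (map (fun p => norm2 d (vsub (xs (fst p)) (xs (snd p)))) (list_prod I I)).

Definition avg (xs : nat -> vec) (I : list nat) : vec :=
  fun i => fold_right Rplus 0 (map (fun a => xs a i) I) / INR (length I).

Definition admissible (f q : nat) (I : list nat) : Prop :=
  NoDup I /\ length I = (q - f)%nat /\ (forall a, In a I -> (a < q)%nat).

(* y is a possible value of MDA_f(xs 0, ..., xs (q-1)) (ties broken arbitrarily) *)
Definition IsMDA (d f q : nat) (xs : nat -> vec) (y : vec) : Prop :=
  exists I : list nat, admissible f q I /\
    (forall J : list nat, admissible f q J -> diam d xs I <= diam d xs J) /\
    veq d y (avg xs I).

(* Abstract expectation: Int is the class of integrable real random variables
   on the sample space Omega, E is the expectation: a normalized, linear,
   monotone functional on Int. *)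
Definition IsExpectation {Omega : Type} (Int : (Omega -> R) -> Prop)
  (E : (Omega -> R) -> R) : Prop :=
  (forall c : R, Int (fun _ => c) /\ E (fun _ => c) = c) /\
  (forall f g, Int f -> Int g -> Int (fun w => f w + g w) /\
                E (fun w => f w + g w) = E f + E g) /\
  (forall (c : R) f, Int f -> Int (fun w => c * f w) /\ E (fun w => c * f w) = c * E f) /\
  (forall f g, Int f -> Int g -> (forall w, f w <= g w) -> E f <= E g).

From Stdlib Require Import Reals Lra Lia List.
Open Scope R_scope.

(* The argument is deterministic for each outcome w, followed by one use of
   the expectation axioms.  Write S(w) = sum_r |g_r(w) - gradL x_r| for the
   total gradient error of the correct workers, and Delta = Delta(theta).
   1. Since every x_r lies in the coordinate box spanned by the theta_k, any
      two points of that box are at Euclidean distance <= Delta (the l2 norm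
      is bounded by the l1 norm), hence their gradients differ by <= l Delta.
   2. Any correct gradient estimate is within S + l Delta of gradL theta_k,
      and any two of them are within 2S + l Delta of each other.
   3. MDA outputs the average of a set I of minimal diameter; a set J of
      q - f correct inputs exists, I and J intersect since 2(q - f) > q, so
      the output is within diam I <= diam J <= 2S + l Delta of a correct
      input.  Altogether |G_j - gradL theta_k| <= 3S + 2 l Delta.
   4. Taking expectations gives 3 h_w sigma' + 2 l Delta; l >= 0 as soon as
      d > 0, while for d = 0 everything vanishes. *)

Definition sumL (ns : list nat) (F : nat -> R) : R := fold_right Rplus 0 (map F ns).

Lemma sumL_cons a ns F : sumL (a :: ns) F = F a + sumL ns F.
Proof. reflexivity. Qed.

Lemma sumL_ext ns F1 F2 :
  (forall a, In a ns -> F1 a = F2 a) -> sumL ns F1 = sumL ns F2.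
Proof.
  induction ns as [|a ns IH]; intros H; [reflexivity|].
  rewrite !sumL_cons, H, IH; auto with datatypes.
Qed.

Lemma sumL_le ns F1 F2 :
  (forall a, In a ns -> F1 a <= F2 a) -> sumL ns F1 <= sumL ns F2.
Proof.
  induction ns as [|a ns IH]; intros H; [apply Rle_refl|].
  rewrite !sumL_cons. apply Rplus_le_compat; auto with datatypes.
Qed.

Lemma sumL_plus ns F1 F2 : sumL ns (fun a => F1 a + F2 a) = sumL ns F1 + sumL ns F2.
Proof. induction ns; unfold sumL in *; simpl; lra. Qed.

Lemma sumL_scal ns c F : sumL ns (fun a => c * F a) = c * sumL ns F.
Proof. induction ns; unfold sumL in *; simpl; lra. Qed.

Lemma sumL_nonneg ns F : (forall a, In a ns -> 0 <= F a) -> 0 <= sumL ns F.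
Proof.
  intros H. replace 0 with (sumL ns (fun _ => 0 * 0)) by (rewrite sumL_scal; ring).
  apply sumL_le. intros a Ha. rewrite Rmult_0_l. auto.
Qed.

Lemma sumL_const_le ns F M :
  (forall a, In a ns -> F a <= M) -> sumL ns F <= INR (length ns) * M.
Proof.
  induction ns as [|a ns IH]; intros H; [unfold sumL; simpl; lra|].
  rewrite sumL_cons. cbn [length]. rewrite S_INR.
  assert (F a <= M) by auto with datatypes.
  assert (sumL ns F <= INR (length ns) * M) by auto with datatypes. lra.
Qed.

Lemma sumL_ge_elem ns F r :
  (forall a, In a ns -> 0 <= F a) -> In r ns -> F r <= sumL ns F.
Proof.
  induction ns as [|a ns IH]; intros H Hr; [destruct Hr|]. rewrite sumL_cons.
  assert (0 <= F a) by auto with datatypes.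
  assert (0 <= sumL ns F) by (apply sumL_nonneg; auto with datatypes).
  destruct Hr as [<-|Hr]; [lra|].
  assert (F r <= sumL ns F) by auto with datatypes. lra.
Qed.

Lemma norm2_eq d v : norm2 d v = sqrt (sumL (seq 0 d) (fun i => v i * v i)).
Proof. reflexivity. Qed.

Lemma norm2_ge0 d v : 0 <= norm2 d v.
Proof. apply sqrt_pos. Qed.

Lemma norm2_ext d u v : veq d u v -> norm2 d u = norm2 d v.
Proof.
  intros H. rewrite !norm2_eq. f_equal. apply sumL_ext.
  intros i Hi. apply in_seq in Hi. rewrite H by lia. reflexivity.
Qed.

Lemma norm2_dim0 v : norm2 0 v = 0.
Proof. apply sqrt_0. Qed.

Lemma sum_squares_ge0 ns v : 0 <= sumL ns (fun i => v i * v i).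
Proof. apply sumL_nonneg; intros; nra. Qed.

(* Inductive step of Cauchy-Schwarz: if s^2 <= S T then 2 s a b <= S b^2 + T a^2,
   by the identity S (S b^2 + T a^2 - 2sab) = (Sb - sa)^2 + (ST - s^2) a^2. *)
Lemma cauchy_schwarz_step s S T a b :
  0 <= S -> 0 <= T -> s * s <= S * T -> 2 * s * a * b <= S * b * b + T * a * a.
Proof.
  intros HS HT Hs. destruct (Req_dec S 0) as [->|HS0].
  - rewrite Rmult_0_l in Hs. assert (s = 0) by nra. subst. nra.
  - assert (S * (S * b * b + T * a * a - 2 * s * a * b)
            = (S * b - s * a) * (S * b - s * a) + (S * T - s * s) * (a * a)) by ring.
    assert (0 <= (S * T - s * s) * (a * a)) by (apply Rmult_le_pos; nra).
    assert (0 <= (S * b - s * a) * (S * b - s * a)) by apply Rle_0_sqr.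
    assert (0 < S) by lra.
    assert (0 <= S * b * b + T * a * a - 2 * s * a * b); [|lra].
    apply (Rmult_le_reg_l S); lra.
Qed.

Lemma cauchy_schwarz ns u v :
  sumL ns (fun i => u i * v i) * sumL ns (fun i => u i * v i)
  <= sumL ns (fun i => u i * u i) * sumL ns (fun i => v i * v i).
Proof.
  induction ns as [|a ns IH]; rewrite ?sumL_cons; [unfold sumL; simpl; lra|].
  pose proof (cauchy_schwarz_step _ _ _ (u a) (v a)
                (sum_squares_ge0 ns u) (sum_squares_ge0 ns v) IH).
  nra.
Qed.

Lemma norm2_triangle d u v : norm2 d (vadd u v) <= norm2 d u + norm2 d v.
Proof.
  rewrite !norm2_eq. set (ns := seq 0 d).
  set (A := sqrt (sumL ns (fun i => u i * u i))).
  set (B := sqrt (sumL ns (fun i => v i * v i))).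
  assert (HA : A * A = sumL ns (fun i => u i * u i)) by apply sqrt_sqrt, sum_squares_ge0.
  assert (HB : B * B = sumL ns (fun i => v i * v i)) by apply sqrt_sqrt, sum_squares_ge0.
  assert (0 <= A) by apply sqrt_pos. assert (0 <= B) by apply sqrt_pos.
  pose proof (cauchy_schwarz ns u v) as Hcs.
  set (s := sumL ns (fun i => u i * v i)) in *.
  assert (Hs : s <= A * B).
  { apply Rsqr_incr_0_var; [|nra]. unfold Rsqr. rewrite <- HA, <- HB in Hcs. nra. }
  assert (Hexp : sumL ns (fun i => vadd u v i * vadd u v i) = A * A + 2 * s + B * B).
  { rewrite HA, HB. unfold s. rewrite <- sumL_scal, <- !sumL_plus.
    apply sumL_ext. intros; unfold vadd; ring. }
  rewrite Hexp, <- (sqrt_square (A + B)) by lra.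
  apply sqrt_le_1; [rewrite <- Hexp; apply sum_squares_ge0 | nra | nra].
Qed.

Lemma norm2_sub_triangle d u v w :
  norm2 d (vsub u w) <= norm2 d (vsub u v) + norm2 d (vsub v w).
Proof.
  rewrite (norm2_ext d (vsub u w) (vadd (vsub u v) (vsub v w))).
  - apply norm2_triangle.
  - intros i _. unfold vsub, vadd. ring.
Qed.

Lemma norm2_sub_sym d u v : norm2 d (vsub u v) = norm2 d (vsub v u).
Proof. rewrite !norm2_eq. f_equal. apply sumL_ext; intros; unfold vsub; ring. Qed.

Lemma norm2_scal d c v : norm2 d (fun i => c * v i) = Rabs c * norm2 d v.
Proof.
  rewrite !norm2_eq, (sumL_ext _ _ (fun i => (c * c) * (v i * v i))) by (intros; ring).
  rewrite sumL_scal, sqrt_mult; [| apply Rle_0_sqr | apply sum_squares_ge0].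
  rewrite <- (sqrt_Rsqr_abs c). reflexivity.
Qed.

Lemma norm2_sumL d I (W : nat -> vec) :
  norm2 d (fun i => sumL I (fun a => W a i)) <= sumL I (fun a => norm2 d (W a)).
Proof.
  induction I as [|a I IH].
  - unfold sumL; simpl.
    rewrite (norm2_ext d _ (fun _ => 0 * 0)) by (intros i _; ring).
    rewrite norm2_scal, Rabs_R0. lra.
  - rewrite sumL_cons.
    rewrite (norm2_ext d _ (vadd (W a) (fun i => sumL I (fun b => W b i))))
      by (intros i _; reflexivity).
    pose proof (norm2_triangle d (W a) (fun i => sumL I (fun b => W b i))). lra.
Qed.

Lemma norm2_le_l1 d v : norm2 d v <= sumL (seq 0 d) (fun i => Rabs (v i)).
Proof.
  rewrite norm2_eq. set (T := sumL (seq 0 d) (fun i => Rabs (v i))).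
  assert (0 <= T) by (apply sumL_nonneg; intros; apply Rabs_pos).
  rewrite <- (sqrt_square T) by auto. apply sqrt_le_1; [apply sum_squares_ge0 | nra |].
  unfold T. clear. induction (seq 0 d) as [|a ns IH]; [unfold sumL; simpl; lra|].
  rewrite !sumL_cons.
  assert (0 <= sumL ns (fun i => Rabs (v i))) by (apply sumL_nonneg; intros; apply Rabs_pos).
  pose proof (Rabs_pos (v a)).
  assert (Rabs (v a) * Rabs (v a) = v a * v a) by (rewrite <- Rabs_mult; apply Rabs_right; nra).
  nra.
Qed.

Lemma fmax_ge (xs : list R) a : In a xs -> a <= fold_right Rmax 0 xs.
Proof.
  induction xs as [|b xs IH]; simpl; [tauto|]. intros [<-|H].
  - apply Rmax_l.
  - eapply Rle_trans; [apply IH; auto | apply Rmax_r].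
Qed.

Lemma fmax_le (xs : list R) B :
  0 <= B -> (forall a, In a xs -> a <= B) -> fold_right Rmax 0 xs <= B.
Proof. induction xs; simpl; intros HB H; auto. apply Rmax_lub; auto. Qed.

Lemma fmax_ge0 (xs : list R) : 0 <= fold_right Rmax 0 xs.
Proof. induction xs; simpl; [lra|]. eapply Rle_trans; [eassumption | apply Rmax_r]. Qed.

Lemma maxpairs_ge n F j k : (j < n)%nat -> (k < n)%nat -> F j k <= maxpairs n F.
Proof.
  intros Hj Hk. apply fmax_ge.
  apply (in_map (fun p => F (fst p) (snd p)) _ (j, k)). apply in_prod; apply in_seq; lia.
Qed.

Lemma maxpairs_le n F B :
  0 <= B -> (forall j k, (j < n)%nat -> (k < n)%nat -> F j k <= B) -> maxpairs n F <= B.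
Proof.
  intros HB H. apply fmax_le; auto.
  intros z Hz. apply in_map_iff in Hz. destruct Hz as [[j k] [<- Hin]].
  apply in_prod_iff in Hin as [Hj Hk]. apply in_seq in Hj, Hk. simpl. apply H; lia.
Qed.

Lemma diam_ge d xs I a b :
  In a I -> In b I -> norm2 d (vsub (xs a) (xs b)) <= diam d xs I.
Proof.
  intros Ha Hb. apply fmax_ge.
  apply (in_map (fun p => norm2 d (vsub (xs (fst p)) (xs (snd p)))) _ (a, b)).
  apply in_prod; auto.
Qed.

Lemma diam_le d xs I B :
  0 <= B -> (forall a b, In a I -> In b I -> norm2 d (vsub (xs a) (xs b)) <= B) ->
  diam d xs I <= B.
Proof.
  intros HB H. apply fmax_le; auto.
  intros z Hz. apply in_map_iff in Hz. destruct Hz as [[a b] [<- Hin]].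
  apply in_prod_iff in Hin as [Ha Hb]. apply H; auto.
Qed.

Lemma avg_bound d xs I y M :
  (0 < length I)%nat -> (forall a, In a I -> norm2 d (vsub (xs a) y) <= M) ->
  norm2 d (vsub (avg xs I) y) <= M.
Proof.
  intros HI H. set (n := INR (length I)).
  assert (Hn : 0 < n) by (apply lt_0_INR; auto).
  assert (Hsum : forall i, fold_right Rplus 0 (map (fun a => xs a i) I) - n * y i
                           = sumL I (fun a => vsub (xs a) y i)).
  { intros i. unfold n. clear. induction I as [|a I IH]; [unfold sumL; simpl; lra|].
    rewrite sumL_cons. cbn [length map fold_right]. rewrite S_INR.
    unfold sumL, vsub in *. lra. }
  rewrite (norm2_ext d _ (fun i => / n * sumL I (fun a => vsub (xs a) y i))).
  2:{ intros i _. rewrite <- Hsum. unfold vsub, avg. fold n. field. lra. }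
  assert (Hinv : 0 < / n) by (apply Rinv_0_lt_compat; auto).
  rewrite norm2_scal, Rabs_right by lra.
  apply Rle_trans with (/ n * (n * M)); [|right; field; lra].
  apply Rmult_le_compat_l; [lra|].
  eapply Rle_trans; [apply norm2_sumL | apply sumL_const_le; auto].
Qed.

Lemma common_index (I J : list nat) q :
  NoDup I -> NoDup J -> (q < length I + length J)%nat ->
  (forall a, In a I -> (a < q)%nat) -> (forall a, In a J -> (a < q)%nat) ->
  exists c, In c I /\ In c J.
Proof.
  intros NDI NDJ Hq BI BJ.
  destruct (Exists_dec (fun c => In c J) I (fun c => in_dec Nat.eq_dec c J))
    as [Hex|Hnot].
  - apply Exists_exists in Hex. exact Hex.
  - exfalso.
    assert (ND : NoDup (I ++ J)).
    { apply NoDup_app; auto. intros a Ha HaJ. apply Hnot, Exists_exists. eauto. }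
    assert (Hincl : incl (I ++ J) (seq 0 q)).
    { intros a Ha. apply in_seq. apply in_app_or in Ha as [Ha|Ha];
        [apply BI in Ha | apply BJ in Ha]; lia. }
    pose proof (NoDup_incl_length ND Hincl). rewrite length_app, length_seq in *. lia.
Qed.

Lemma admissible_prefix f q (C : list nat) :
  NoDup C -> (q - f <= length C)%nat -> (forall a, In a C -> (a < q)%nat) ->
  admissible f q (firstn (q - f) C) /\ incl (firstn (q - f) C) C.
Proof.
  intros ND HC BC.
  assert (Hincl : incl (firstn (q - f) C) C).
  { intros a Ha. rewrite <- (firstn_skipn (q - f) C). apply in_or_app; auto. }
  split; [split; [|split] | exact Hincl].
  - rewrite <- (firstn_skipn (q - f) C) in ND. eapply NoDup_app_remove_r; eauto.
  - apply firstn_length_le; auto.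
  - auto.
Qed.

(* Key property of MDA: when q >= 2f + 1, the output lies within diam J of some
   input of J, for every admissible J (the minimal-diameter set meets J). *)
Lemma mda_close_to_admissible d f q xs y J :
  (2 * f + 1 <= q)%nat -> IsMDA d f q xs y -> admissible f q J ->
  exists c, In c J /\ norm2 d (vsub y (xs c)) <= diam d xs J.
Proof.
  intros Hq [I [[NDI [LI BI]] [Hmin Hy]]] HJ.
  destruct HJ as [NDJ [LJ BJ]].
  destruct (common_index I J q NDI NDJ ltac:(lia) BI BJ) as [c [cI cJ]].
  exists c. split; auto.
  rewrite (norm2_ext d _ (vsub (avg xs I) (xs c)))
    by (intros i Hi; unfold vsub; rewrite Hy; auto).
  apply avg_bound; [lia|]. intros a Ha.
  eapply Rle_trans; [apply diam_ge; eauto | apply Hmin; repeat split; auto].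
Qed.

Definition in_box (d hps : nat) (theta : nat -> vec) (u : vec) : Prop :=
  forall i, (i < d)%nat -> exists k1 k2, (k1 < hps)%nat /\ (k2 < hps)%nat /\
    theta k1 i <= u i /\ u i <= theta k2 i.

Lemma theta_in_box d hps theta k : (k < hps)%nat -> in_box d hps theta (theta k).
Proof. intros Hk i _. exists k, k. repeat split; auto; lra. Qed.

Lemma DeltaDiam_ge0 d hps theta : 0 <= DeltaDiam d hps theta.
Proof. apply sumL_nonneg. intros; apply fmax_ge0. Qed.

(* Two points of the box are at distance at most Delta(theta): in coordinate i
   they differ by at most the diameter Delta_i, and l2 <= l1. *)
Lemma box_dist d hps theta u v :
  in_box d hps theta u -> in_box d hps theta v ->
  norm2 d (vsub u v) <= DeltaDiam d hps theta.
Proof.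
  intros Hu Hv. eapply Rle_trans; [apply norm2_le_l1|]. apply sumL_le.
  intros i Hi. apply in_seq in Hi.
  destruct (Hu i ltac:(lia)) as [a1 [a2 [Ha1 [Ha2 [Hua1 Hua2]]]]].
  destruct (Hv i ltac:(lia)) as [b1 [b2 [Hb1 [Hb2 [Hvb1 Hvb2]]]]].
  set (F := fun j k => Rabs (theta j i - theta k i)).
  pose proof (maxpairs_ge hps F a2 b1 Ha2 Hb1).
  pose proof (maxpairs_ge hps F b2 a1 Hb2 Ha1).
  unfold F in *. pose proof (Rle_abs (theta a2 i - theta b1 i)).
  pose proof (Rle_abs (theta b2 i - theta a1 i)).
  unfold vsub, Delta_i. apply Rabs_le. lra.
Qed.

Section ScatterStep.

Variables (d : nat) (gradL : vec -> vec) (l : R).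
Hypothesis Hl : 0 <= l.
Hypothesis Hlip : LipschitzGrad d gradL l.
Variables (hps : nat) (theta : nat -> vec).

Lemma grad_box_dist u v :
  in_box d hps theta u -> in_box d hps theta v ->
  norm2 d (vsub (gradL u) (gradL v)) <= l * DeltaDiam d hps theta.
Proof.
  intros Hu Hv. eapply Rle_trans; [apply Hlip|].
  apply Rmult_le_compat_l; auto. apply box_dist; auto.
Qed.

(* Correct workers: models x_r in the box, gradient estimates g_r. *)
Variables (hw : nat) (x g : nat -> vec).
Hypothesis Hx : forall r, (r < hw)%nat -> in_box d hps theta (x r).

Definition total_error : R :=
  sumL (seq 0 hw) (fun r => norm2 d (vsub (g r) (gradL (x r)))).

Lemma total_error_ge0 : 0 <= total_error.
Proof. apply sumL_nonneg. intros; apply norm2_ge0. Qed.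

Lemma error_le_total r :
  (r < hw)%nat -> norm2 d (vsub (g r) (gradL (x r))) <= total_error.
Proof.
  intros Hr. apply (sumL_ge_elem _ (fun r => norm2 d (vsub (g r) (gradL (x r))))).
  - intros; apply norm2_ge0.
  - apply in_seq; lia.
Qed.

Lemma honest_to_grad r k :
  (r < hw)%nat -> (k < hps)%nat ->
  norm2 d (vsub (g r) (gradL (theta k))) <= total_error + l * DeltaDiam d hps theta.
Proof.
  intros Hr Hk.
  pose proof (norm2_sub_triangle d (g r) (gradL (x r)) (gradL (theta k))).
  pose proof (grad_box_dist (x r) (theta k) (Hx r Hr) (theta_in_box d hps theta k Hk)).
  pose proof (error_le_total r Hr). lra.
Qed.

Lemma honest_diam (xs : nat -> vec) (J : list nat) :
  (forall a, In a J -> exists r, (r < hw)%nat /\ veq d (xs a) (g r)) ->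
  diam d xs J <= 2 * total_error + l * DeltaDiam d hps theta.
Proof.
  intros HJ. pose proof total_error_ge0. pose proof (DeltaDiam_ge0 d hps theta).
  apply diam_le; [nra|]. intros a b Ha Hb.
  destruct (HJ a Ha) as [r1 [Hr1 H1]]. destruct (HJ b Hb) as [r2 [Hr2 H2]].
  rewrite (norm2_ext d _ (vsub (g r1) (g r2)))
    by (intros i Hi; unfold vsub; rewrite H1, H2 by auto; reflexivity).
  pose proof (norm2_sub_triangle d (g r1) (gradL (x r1)) (g r2)).
  pose proof (norm2_sub_triangle d (gradL (x r1)) (gradL (x r2)) (g r2)).
  rewrite (norm2_sub_sym d (gradL (x r2)) (g r2)) in *.
  pose proof (grad_box_dist (x r1) (x r2) (Hx r1 Hr1) (Hx r2 Hr2)).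
  pose proof (error_le_total r1 Hr1). pose proof (error_le_total r2 Hr2). lra.
Qed.

Lemma mda_gradient_error f q (xs : nat -> vec) (y : vec) k :
  (2 * f + 1 <= q)%nat -> IsMDA d f q xs y ->
  (exists C : list nat, NoDup C /\ (q - f <= length C)%nat /\
     forall a, In a C -> (a < q)%nat /\
       exists r, (r < hw)%nat /\ veq d (xs a) (g r)) ->
  (k < hps)%nat ->
  norm2 d (vsub y (gradL (theta k))) <= 3 * total_error + 2 * l * DeltaDiam d hps theta.
Proof.
  intros Hq Hy [C [NDC [LC HC]]] Hk.
  destruct (admissible_prefix f q C NDC LC (fun a Ha => proj1 (HC a Ha)))
    as [HJ HJC].
  destruct (mda_close_to_admissible d f q xs y _ Hq Hy HJ) as [c [Hc Hclose]].
  destruct (proj2 (HC c (HJC c Hc))) as [r [Hr Hcr]].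
  pose proof (honest_diam xs (firstn (q - f) C) (fun a Ha => proj2 (HC a (HJC a Ha)))).
  pose proof (norm2_sub_triangle d y (xs c) (gradL (theta k))).
  rewrite (norm2_ext d (vsub (xs c) (gradL (theta k))) (vsub (g r) (gradL (theta k))))
    in * by (intros i Hi; unfold vsub; rewrite Hcr by auto; reflexivity).
  pose proof (honest_to_grad r k Hr Hk). lra.
Qed.

End ScatterStep.

Section Expectation.

Variables (Omega : Type) (Int : (Omega -> R) -> Prop) (E : (Omega -> R) -> R).
Hypothesis HE : IsExpectation Int E.

Lemma expect_sum_le ns (F : nat -> Omega -> R) s :
  (forall r, In r ns -> Int (F r) /\ E (F r) <= s) ->
  Int (fun w => sumL ns (fun r => F r w)) /\
  E (fun w => sumL ns (fun r => F r w)) <= INR (length ns) * s.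
Proof.
  destruct HE as [Hconst [Hadd _]].
  induction ns as [|a ns IH]; intros Hns.
  - destruct (Hconst 0) as [Hi He]. unfold sumL; simpl. split; auto. lra.
  - destruct IH as [Ins Ens]; [auto with datatypes|].
    destruct (Hns a) as [Ia Ea]; [left; reflexivity|].
    destruct (Hadd (F a) (fun w => sumL ns (fun r => F r w)) Ia Ins) as [Isum Esum].
    split; [exact Isum|]. change (E (fun w => F a w + sumL ns (fun r => F r w))
                                   <= INR (S (length ns)) * s).
    rewrite Esum, S_INR. lra.
Qed.

Lemma expect_le_affine (X Y : Omega -> R) a b :
  Int X -> Int Y -> (forall w, X w <= a * Y w + b) -> E X <= a * E Y + b.
Proof.
  destruct HE as [Hconst [Hadd [Hscal Hmon]]]. intros IX IY Hle.
  destruct (Hscal a Y IY) as [IaY EaY]. destruct (Hconst b) as [Ib Eb].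
  destruct (Hadd _ _ IaY Ib) as [Isum Esum].
  rewrite <- EaY, <- Eb, <- Esum. apply Hmon; auto.
Qed.

End Expectation.

Lemma scatter_step_bound
  (d : nat) (gradL : vec -> vec) (l : R) (Hl : 0 <= l)
  (Hlip : LipschitzGrad d gradL l)
  (hps hw : nat) (theta x : nat -> vec)
  (Hx : forall r, (r < hw)%nat -> in_box d hps theta (x r))
  (Omega : Type) (Int : (Omega -> R) -> Prop) (E : (Omega -> R) -> R)
  (HE : IsExpectation Int E)
  (g : nat -> Omega -> vec) (sigma' : R)
  (Hg : forall r, (r < hw)%nat ->
          Int (fun w => norm2 d (vsub (g r w) (gradL (x r)))) /\
          E (fun w => norm2 d (vsub (g r w) (gradL (x r)))) <= sigma')
  (fw qw : nat) (Hqw : (2 * fw + 1 <= qw)%nat)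
  (inp : nat -> Omega -> nat -> vec) (G : nat -> Omega -> vec)
  (Hinp : forall j w, (j < hps)%nat ->
          exists C : list nat, NoDup C /\ (qw - fw <= length C)%nat /\
            forall a, In a C -> (a < qw)%nat /\
              exists r, (r < hw)%nat /\ veq d (inp j w a) (g r w))
  (HG : forall j w, (j < hps)%nat -> IsMDA d fw qw (inp j w) (G j w))
  (Hmeas : Int (fun w => maxpairs hps
                  (fun j k => norm2 d (vsub (G j w) (gradL (theta k)))))) :
  E (fun w => maxpairs hps (fun j k => norm2 d (vsub (G j w) (gradL (theta k)))))
    <= 3 * INR hw * sigma' + 2 * l * DeltaDiam d hps theta.
Proof.
  set (S := fun w => total_error d gradL hw x (fun r => g r w)).
  destruct (expect_sum_le Omega Int E HE (seq 0 hw)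
              (fun r w => norm2 d (vsub (g r w) (gradL (x r)))) sigma')
    as [IS ES]; [intros r Hr; apply in_seq in Hr; apply Hg; lia|].
  rewrite length_seq in ES.
  change (Int S) in IS. change (E S <= INR hw * sigma') in ES.
  assert (Hpoint : forall w, maxpairs hps (fun j k => norm2 d (vsub (G j w) (gradL (theta k))))
                             <= 3 * S w + 2 * l * DeltaDiam d hps theta).
  { intros w. pose proof (total_error_ge0 d gradL hw x (fun r => g r w)).
    pose proof (DeltaDiam_ge0 d hps theta).
    apply maxpairs_le; [unfold S; nra|]. intros j k Hj Hk.
    apply (mda_gradient_error d gradL l Hl Hlip hps theta hw x (fun r => g r w) Hx
             fw qw (inp j w) (G j w) k); auto. }
  pose proof (expect_le_affine Omega Int E HE _ S 3 _ Hmeas IS Hpoint). lra.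
Qed.

(* A Lipschitz constant in positive dimension is nonnegative: test it on the
   first basis vector and the origin. *)
Lemma lipschitz_const_nonneg d gradL l : LipschitzGrad (S d) gradL l -> 0 <= l.
Proof.
  intros Hlip. set (e0 := fun i : nat => if Nat.eqb i 0 then 1 else 0).
  assert (He0 : 1 <= norm2 (S d) (vsub e0 (fun _ => 0))).
  { rewrite norm2_eq, <- sqrt_1. apply sqrt_le_1; [lra | apply sum_squares_ge0 |].
    cbn [seq]. rewrite sumL_cons.
    pose proof (sum_squares_ge0 (seq 1 d) (vsub e0 (fun _ => 0))).
    unfold vsub at 1 2, e0 at 1 2; simpl. lra. }
  pose proof (Hlip e0 (fun _ => 0)).
  pose proof (norm2_ge0 (S d) (vsub (gradL e0) (gradL (fun _ => 0)))). nra.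
Qed.

Theorem mainTheorem10
  (d : nat) (L : vec -> R) (gradL : vec -> vec) (l eta : R)
  (HgradL : IsGradient d L gradL) (Hlip : LipschitzGrad d gradL l)
  (Heta : 0 < eta)
  (hps hw : nat) (theta x : nat -> vec)
  (Hx : forall r i, (r < hw)%nat -> (i < d)%nat ->
          exists k1 k2, (k1 < hps)%nat /\ (k2 < hps)%nat /\
            theta k1 i <= x r i /\ x r i <= theta k2 i)
  (Omega : Type) (Int : (Omega -> R) -> Prop) (E : (Omega -> R) -> R)
  (HE : IsExpectation Int E)
  (g : nat -> Omega -> vec) (sigma' : R)
  (Hg : forall r, (r < hw)%nat ->
          Int (fun w => norm2 d (vsub (g r w) (gradL (x r)))) /\
          E (fun w => norm2 d (vsub (g r w) (gradL (x r)))) <= sigma')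
  (fw qw : nat) (Hfw : (1 <= fw)%nat) (Hqw : (2 * fw + 1 <= qw)%nat)
  (inp : nat -> Omega -> nat -> vec) (G : nat -> Omega -> vec)
  (Hinp : forall j w, (j < hps)%nat ->
          exists C : list nat, NoDup C /\ (qw - fw <= length C)%nat /\
            forall a, In a C -> (a < qw)%nat /\
              exists r, (r < hw)%nat /\ veq d (inp j w a) (g r w))
  (HG : forall j w, (j < hps)%nat -> IsMDA d fw qw (inp j w) (G j w))
  (Hmeas : Int (fun w => maxpairs hps
                  (fun j k => norm2 d (vsub (G j w) (gradL (theta k)))))) :
  E (fun w => maxpairs hps (fun j k => norm2 d (vsub (G j w) (gradL (theta k)))))
    <= 3 * INR hw * sigma' + 3 * l * DeltaDiam d hps theta.
Proof.
  assert (Hbox : forall r, (r < hw)%nat -> in_box d hps theta (x r))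
    by (intros r Hr i Hi; apply Hx; auto).
  destruct d as [|d'].
  - (* In dimension 0 every norm vanishes, so 0 is a Lipschitz constant and Delta = 0. *)
    assert (Hlip0 : LipschitzGrad 0 gradL 0)
      by (intros u v; rewrite !norm2_dim0; lra).
    pose proof (scatter_step_bound 0 gradL 0 (Rle_refl 0) Hlip0 hps hw theta x Hbox
                  Omega Int E HE g sigma' Hg fw qw Hqw inp G Hinp HG Hmeas).
    change (DeltaDiam 0 hps theta) with 0 in *. lra.
  - pose proof (lipschitz_const_nonneg d' gradL l Hlip) as Hl.
    pose proof (scatter_step_bound (S d') gradL l Hl Hlip hps hw theta x Hbox
                  Omega Int E HE g sigma' Hg fw qw Hqw inp G Hinp HG Hmeas).
    pose proof (DeltaDiam_ge0 (S d') hps theta). nra.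
Qed.
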